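(* The real flag manifolds $\mathbb F_\Theta$ of type $D_4$ with $\Theta$ equal to one of $\{\lambda_1-\lambda_2,\lambda_2-\lambda_3,\lambda_3-\lambda_4\}$, $\{\lambda_1-\lambda_2,\lambda_2-\lambda_3,\lambda_3+\lambda_4\}$, $\{\lambda_2-\lambda_3,\lambda_3-\lambda_4,\lambda_3+\lambda_4\}$ do not admit $K$-invariant almost complex structures.
   Context: $\mathfrak g=\mathfrak{so}(4,4)$ (split real form of type $D_4$) with Iwasawa decomposition $\mathfrak g=\mathfrak k\oplus\mathfrak a\oplus\mathfrak n$, roots $\pm\lambda_i\pm\lambda_j$ ($1\le i<j\le4$), simple roots $\lambda_1-\lambda_2,\lambda_2-\lambda_3,\lambda_3-\lambda_4,\lambda_3+\lambda_4$. For $\Theta\subset\Sigma$, $\mathfrak p_\Theta=\mathfrak a\oplus\sum_{\alpha>0}\mathfrak g_\alpha\oplus\sum_{\alpha\in\langle\Theta\rangle^-}\mathfrak g_\alpha$ ($\langle\Theta\rangle^-$ the negative roots generated by $\Theta$); $G$ is the inner automorphism group of $\mathfrak g$, $K$ its maximal compact subgroup, $P_\Theta$ the normalizer of $\mathfrak p_\Theta$, $K_\Theta=K\cap P_\Theta$, $\mathbb F_\Theta=G/P_\Theta=K/K_\Theta$. $K$-invariant means invariant under the left $K$-action. *)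

From HB Require Import structures.
From mathcomp Require Import all_boot all_order all_algebra.
From mathcomp Require Import reals.
Set Implicit Arguments. Unset Strict Implicit. Unset Printing Implicit Defensive.
Import Order.TTheory GRing.Theory Num.Theory.
Local Open Scope ring_scope.

(** * Concrete model of g = so(4,4) (split real form of D_4).

  Writing X = [[A, B], [C, D]] (4x4 blocks), X in g iff D = -A^T, B, C skew.
  Cartan involution theta X = - X^T, so k = { X in g | X^T = - X }.
  a = { diag(h, -h) : h in R^4 } (a maximal split abelian subspace), and
  lambda_i (diag(h,-h)) = h_i.  Root spaces (one-dimensional):
    lambda_i - lambda_j (i <> j) : R (E_{i,j} - E_{4+j,4+i})
    lambda_i + lambda_j (i < j)  : R (E_{i,4+j} - E_{j,4+i})
   -(lambda_i + lambda_j) (i < j): R (E_{4+i,j} - E_{4+j,i})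
  and g = a (+) sum of root spaces (g_0 = a since g is split).
  Positive roots (w.r.t. the simple roots of the statement): lambda_i - lambda_j
  (i<j) and lambda_i + lambda_j.  For X in g the g_alpha-component of X, for a
  negative root alpha, is the coefficient X i j (alpha = lambda_i - lambda_j,
  i > j) resp. X (4+i) j (alpha = -(lambda_i+lambda_j), i < j). *)

Definition N8 := (4 + 4)%N.
Definition lsh (i : 'I_4) : 'I_(4 + 4) := lshift 4 i.
Definition rsh (i : 'I_4) : 'I_(4 + 4) := rshift 4 i.

Section Model.
Variable R : realType.

Definition Qform : 'M[R]_(4 + 4) := block_mx 0 1%:M 1%:M 0.

Definition in_g (X : 'M[R]_(4 + 4)) : Prop := X^T *m Qform + Qform *m X = 0.

Definition in_k (X : 'M[R]_(4 + 4)) : Prop := in_g X /\ X^T = - X.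

End Model.

(** Roots as integer vectors in the basis lambda_1..lambda_4 (indices 0..3). *)
Definition lam (i : 'I_4) : 'rV[int]_4 := \row_(k < 4) (k == i)%:R.

Definition in_span (Theta : seq 'rV[int]_4) (alpha : 'rV[int]_4) : Prop :=
  exists cs : seq int, size cs = size Theta /\
    alpha = \sum_(t <- zip cs Theta) t.1 *: t.2.

Section Parabolic.
Variable R : realType.
Variable Theta : seq 'rV[int]_4.

(** p_Theta = a (+) sum_{alpha>0} g_alpha (+) sum_{alpha in <Theta>^-} g_alpha:
    an element of g lies in p_Theta iff its components along the negative
    root spaces g_alpha with alpha not in <Theta>^- vanish. *)
Definition in_p (X : 'M[R]_(4 + 4)) : Prop :=
  in_g X /\
  (forall i j : 'I_4, (j < i)%N -> ~ in_span Theta (lam i - lam j) ->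
      X (lsh i) (lsh j) = 0) /\
  (forall i j : 'I_4, (i < j)%N -> ~ in_span Theta (- (lam i + lam j)) ->
      X (rsh i) (lsh j) = 0).

(** The maximal compact subgroup K of G = Int(g) is Ad(K0), where
    K0 = SO(4) x SO(4) = identity component of the orthogonal matrices
    preserving Qform.  Such k commute with Qform, so k = [[A,B],[B,A]], acting
    on the +1 / -1 eigenspaces of Qform by A+B and A-B. *)
Definition in_K0 (k : 'M[R]_(4 + 4)) : Prop :=
  k^T *m k = 1%:M /\ k *m Qform R = Qform R *m k /\
  \det (ulsubmx k + ursubmx k) = 1 /\ \det (ulsubmx k - ursubmx k) = 1.

Definition Ad (k X : 'M[R]_(4 + 4)) : 'M[R]_(4 + 4) := k *m X *m k^T.

(** K_Theta = K cap P_Theta, P_Theta the normalizer of p_Theta in G: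
    Ad(k) p_Theta = p_Theta. *)
Definition in_KTheta (k : 'M[R]_(4 + 4)) : Prop :=
  in_K0 k /\ forall X, in_p X <-> in_p (Ad k X).

Definition in_kTheta (X : 'M[R]_(4 + 4)) : Prop := in_k X /\ in_p X.

(** Tangent space T_o F_Theta = k / k_Theta, realised K_Theta-equivariantly
    as the orthogonal complement m_Theta of k_Theta in k w.r.t. the
    Ad(K)-invariant inner product -tr(XY). *)
Definition in_m (X : 'M[R]_(4 + 4)) : Prop :=
  in_k X /\ forall Y, in_kTheta Y -> \tr (X *m Y) = 0.

(** K-invariant almost complex structures on F_Theta = K/K_Theta correspond to
    linear complex structures J on T_o F_Theta commuting with Ad(K_Theta). *)
Definition invariant_acs (J : 'M[R]_(4 + 4) -> 'M[R]_(4 + 4)) : Prop :=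
  (forall X, in_m X -> in_m (J X)) /\
  (forall (a : R) X Y, in_m X -> in_m Y -> J (a *: X + Y) = a *: J X + J Y) /\
  (forall X, in_m X -> J (J X) = - X) /\
  (forall k X, in_KTheta k -> in_m X -> J (Ad k X) = Ad k (J X)).

Definition admits_K_invariant_acs : Prop :=
  exists J : 'M[R]_(4 + 4) -> 'M[R]_(4 + 4), invariant_acs J.

End Parabolic.

Arguments admits_K_invariant_acs : clear implicits.

Definition i0 : 'I_4 := @Ordinal 4 0 isT.
Definition i1 : 'I_4 := @Ordinal 4 1 isT.
Definition i2 : 'I_4 := @Ordinal 4 2 isT.
Definition i3 : 'I_4 := @Ordinal 4 3 isT.

Definition a1 : 'rV[int]_4 := lam i0 - lam i1.
Definition a2 : 'rV[int]_4 := lam i1 - lam i2.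
Definition a3 : 'rV[int]_4 := lam i2 - lam i3.
Definition a4 : 'rV[int]_4 := lam i2 + lam i3.

From mathcomp Require Import all_boot all_order all_algebra reals.
From mathcomp Require Import ring lra zify.
Set Implicit Arguments. Unset Strict Implicit. Unset Printing Implicit Defensive.
Import Order.TTheory GRing.Theory Num.Theory.
Local Open Scope ring_scope.

(* For each of the three Theta we exhibit two elements of K_Theta, the diagonal sign matrix
   diag((-1)^a) and a signed permutation matrix w normalising p_Theta, together with a
   nonzero X0 in m_Theta fixed by both, such that X0 spans the subspace of m_Theta fixed by
   them.  Writing k = {[[A, B], [B, A]] : A, B skew}, that fixed subspace is computed from
   the 12 coordinates of A and B: the sign matrix kills the 8 coordinates (i, j) with i + j
   odd, w identifies the remaining four in pairs, and orthogonality to a single element of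
   k_Theta kills one more.  A K-invariant almost complex structure J commutes with
   Ad(K_Theta), so J X0 = c X0 for some real c, and then J (J X0) = c^2 X0 <> - X0. *)

(** * Coordinates and signed permutation matrices *)

Ltac case8 a := case: a => [|[|[|[|[|[|[|[|?]]]]]]]] //.

Definition swap_half (a : nat) : nat := if (a < 4)%N then (a + 4)%N else (a - 4)%N.

Lemma swap_half_lt a : (a < 8)%N -> (swap_half a < 8)%N.
Proof. by case8 a. Qed.

Lemma swap_halfK a : (a < 8)%N -> swap_half (swap_half a) = a.
Proof. by case8 a. Qed.

Lemma ord4P (i : 'I_4) : [\/ i = i0, i = i1, i = i2 | i = i3].
Proof.
case: i => [[|[|[|[|//]]]] Hi]; [constructor 1 | constructor 2 | constructor 3 | constructor 4];
  exact: val_inj.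
Qed.

Section Coordinates.
Variable R : realType.
Implicit Types (X Y : 'M[R]_(4 + 4)) (f : nat -> nat) (s : nat -> R).

(* [inord] makes [coef X a b] junk when [a] or [b] is [>= 8], hence the bounds below. *)
Definition coef X (a b : nat) : R := X (inord a) (inord b).

Lemma coef_val X (a b : 'I_(4 + 4)) : X a b = coef X a b.
Proof. by rewrite /coef !inord_val. Qed.

Lemma eq_mx_coef X Y : (forall a b, (a < 8)%N -> (b < 8)%N -> coef X a b = coef Y a b) ->
  X = Y.
Proof. by move=> h; apply/matrixP => a b; rewrite !coef_val h. Qed.

Definition involution8 f := forall a, (a < 8)%N -> (f a < 8)%N /\ f (f a) = a.

Lemma id_invol : involution8 id.
Proof. by []. Qed.

Lemma swap_half_invol : involution8 swap_half.
Proof. by move=> a ha; rewrite swap_half_lt ?swap_halfK. Qed.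

Definition sperm_mx f s : 'M[R]_(4 + 4) :=
  \matrix_(a, b) if b == f a :> nat then s a else 0.

Section Involution.
Variables (f : nat -> nat) (s : nat -> R).
Hypothesis f_invol : involution8 f.

Lemma sperm_mulmx X (a b : 'I_(4 + 4)) : (sperm_mx f s *m X) a b = s a * coef X (f a) b.
Proof.
have [fa_lt _] := f_invol (ltn_ord a).
rewrite mxE (bigD1 (inord (f a))) //= mxE inordK // eqxx big1 ?addr0 /coef ?inord_val //.
move=> c nc; rewrite mxE; case: eqP => [fc|]; last by rewrite mul0r.
by case/eqP: nc; apply/val_inj; rewrite /= inordK.
Qed.

Lemma mulmx_tr_sperm X (a b : 'I_(4 + 4)) :
  (X *m (sperm_mx f s)^T) a b = s b * coef X a (f b).
Proof. by rewrite -[X]trmxK -trmx_mul mxE sperm_mulmx /coef !mxE inord_val. Qed.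

Lemma coef_Ad_sperm X a b : (a < 8)%N -> (b < 8)%N ->
  coef (Ad (sperm_mx f s) X) a b = s a * s b * coef X (f a) (f b).
Proof.
move=> ha hb; have [fb_lt _] := f_invol hb.
by rewrite /Ad {1}/coef mulmx_tr_sperm {1}/coef sperm_mulmx !inordK // mulrCA mulrA.
Qed.

Lemma Ad_sperm_fixed X : Ad (sperm_mx f s) X = X ->
  forall a b, (a < 8)%N -> (b < 8)%N -> coef X a b = s a * s b * coef X (f a) (f b).
Proof. by move=> fixX a b ha hb; rewrite -coef_Ad_sperm ?fixX. Qed.

Lemma sperm_mx_sq : (forall a, (a < 8)%N -> s a * s (f a) = 1) ->
  sperm_mx f s *m sperm_mx f s = 1%:M.
Proof.
move=> hs; apply/matrixP => a b; rewrite sperm_mulmx /coef !mxE.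
have [fa_lt ffa] := f_invol (ltn_ord a).
rewrite !inordK // ffa; case: (eqVneq a b) => [->|nab]; first by rewrite eqxx hs.
case: eqP => [eab|_]; last by rewrite mulr0.
by case/eqP: nab; apply/val_inj.
Qed.

End Involution.

Lemma Qform_sperm : Qform R = sperm_mx swap_half (fun _ => 1).
Proof.
apply/matrixP => a b; rewrite /Qform -(splitK a) -(splitK b).
by case: (split a) => i; case: (split b) => j;
  rewrite ?block_mxEul ?block_mxEur ?block_mxEdl ?block_mxEdr !mxE;
  case: (ord4P i) => ->; case: (ord4P j) => ->.
Qed.

End Coordinates.

(** * The compact part k *)

Section CompactPart.
Variable R : realType.
Implicit Types (X Y : 'M[R]_(4 + 4)) (P A B : nat -> nat -> R).

Lemma Qform_tr : (Qform R)^T = Qform R.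
Proof. by rewrite /Qform tr_block_mx !trmx0 trmx1. Qed.

Lemma in_gP X : in_g X <->
  forall a b, (a < 8)%N -> (b < 8)%N -> coef X (swap_half b) a + coef X (swap_half a) b = 0.
Proof.
have entry (a b : 'I_(4 + 4)) :
    (X^T *m Qform R + Qform R *m X) a b = coef X (swap_half b) a + coef X (swap_half a) b.
  rewrite mxE -[X^T *m _]trmxK trmx_mul trmxK Qform_tr mxE Qform_sperm.
  by rewrite !sperm_mulmx ?mul1r //; exact: swap_half_invol.
split=> [gX a b ha hb | h].
  by have := entry (inord a) (inord b); rewrite gX mxE !inordK // => <-.
by apply/matrixP => a b; rewrite entry mxE h.
Qed.

Lemma in_g_mirror X a b : in_g X -> (a < 8)%N -> (b < 8)%N ->
  coef X (swap_half a) (swap_half b) = - coef X b a.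
Proof.
move=> /in_gP gX ha hb; apply/eqP; rewrite -addr_eq0 addrC.
by have := gX _ _ ha (swap_half_lt hb); rewrite swap_halfK // => ->.
Qed.

Definition skew_ext P (i j : nat) : R :=
  if (i < j)%N then P i j else if (j < i)%N then - P j i else 0.

Lemma skew_extC P i j : skew_ext P j i = - skew_ext P i j.
Proof. by rewrite /skew_ext; case: ltngtP => _; rewrite ?opprK ?oppr0. Qed.

(* [kmx A B] is the block matrix [[A, B], [B, A]] with [A], [B] the skew-symmetric 4x4
   matrices whose entries above the diagonal are given by [A], [B]. *)
Definition kmx A B : 'M[R]_(4 + 4) :=
  \matrix_(a, b) skew_ext (if (a < 4)%N == (b < 4)%N then A else B) (a %% 4)%N (b %% 4)%N.

Lemma coef_kmx A B a b : (a < 8)%N -> (b < 8)%N ->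
  coef (kmx A B) a b = skew_ext (if (a < 4)%N == (b < 4)%N then A else B) (a %% 4)%N (b %% 4)%N.
Proof. by move=> ha hb; rewrite /coef mxE !inordK. Qed.

Lemma kmx_in_k A B : in_k (kmx A B).
Proof.
split; last first.
  apply/matrixP => a b; rewrite !mxE skew_extC eq_sym //.
apply/in_gP => a b ha hb; rewrite !coef_kmx ?swap_half_lt //.
have sh_lt c : (c < 8)%N -> (swap_half c < 4)%N = ~~ (c < 4)%N by case8 c.
have sh_mod c : (c < 8)%N -> (swap_half c %% 4 = c %% 4)%N by case8 c.
rewrite !sh_lt // !sh_mod // skew_extC.
by case: (a < 4)%N; case: (b < 4)%N; rewrite /= ?addNr.
Qed.

Lemma skew_extE P i j : (forall i j, (i < 4)%N -> (j < 4)%N -> P j i = - P i j) ->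
  (i < 4)%N -> (j < 4)%N -> skew_ext P i j = P i j.
Proof.
move=> skP hi hj; rewrite /skew_ext; case: ltngtP => [//|ji|<-]; first by rewrite skP ?opprK.
by have := skP i i hi hi; lra.
Qed.

Lemma in_k_kmx X : in_k X -> X = kmx (coef X) (fun i j => coef X i j.+4).
Proof.
case=> gX skX.
have skew a b : coef X b a = - coef X a b.
  by move: (congr1 (fun M => coef M a b) skX); rewrite /coef !mxE.
have shift a b : (a < 8)%N -> (b < 8)%N -> coef X (swap_half a) (swap_half b) = coef X a b.
  by move=> ha hb; rewrite in_g_mirror // skew opprK.
have sh_top i : (i < 4)%N -> swap_half i = i.+4 by case: i => [|[|[|[|]]]].
have sh_bot i : (i < 4)%N -> swap_half i.+4 = i by case: i => [|[|[|[|]]]].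
have B_skew i j : (i < 4)%N -> (j < 4)%N -> coef X j i.+4 = - coef X i j.+4.
  by move=> hi hj; rewrite skew -(shift i.+4 j) ?sh_bot ?(sh_top j) //; lia.
have half c : (c < 8)%N -> c = if (c < 4)%N then (c %% 4)%N else (c %% 4).+4 by case8 c.
apply: eq_mx_coef => a b ha hb; rewrite coef_kmx //.
have [i_lt j_lt] : (a %% 4 < 4)%N /\ (b %% 4 < 4)%N by rewrite !ltn_pmod.
rewrite {1}(half a ha) {1}(half b hb).
case: (a < 4)%N; case: (b < 4)%N => /=; rewrite skew_extE //.
- by rewrite -(shift _ (b %% 4).+4) ?sh_bot ?(sh_top (a %% 4)%N) //; lia.
- by rewrite -shift ?sh_bot //; lia.
Qed.

Lemma eq_kmx A B A' B' :
  (forall i j, (i < j < 4)%N -> A i j = A' i j /\ B i j = B' i j) -> kmx A B = kmx A' B'.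
Proof.
move=> h; apply/matrixP => a b; rewrite !mxE /skew_ext.
have [ha hb] : (a %% 4 < 4)%N /\ (b %% 4 < 4)%N by rewrite !ltn_pmod.
case: ltngtP => hab //.
- have /h[eA eB] : (a %% 4 < b %% 4 < 4)%N by rewrite hab.
  by case: ifP; rewrite ?eA ?eB.
- have /h[eA eB] : (b %% 4 < a %% 4 < 4)%N by rewrite hab.
  by case: ifP; rewrite ?eA ?eB.
Qed.

Lemma scale_kmx c A B :
  c *: kmx A B = kmx (fun i j => c * A i j) (fun i j => c * B i j).
Proof.
apply/matrixP => a b; rewrite !mxE /skew_ext.
by case: ((a < 4)%N == (b < 4)%N); case: ltngtP => _; rewrite ?mulrN ?mulr0.
Qed.

Definition upper_pairs4 : seq (nat * nat) := [:: (0, 1); (0, 2); (0, 3); (1, 2); (1, 3); (2, 3)]%N.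

Lemma tr_kmx_mul A B A' B' : \tr (kmx A B *m kmx A' B') =
  -4 * \sum_(p <- upper_pairs4) (A p.1 p.2 * A' p.1 p.2 + B p.1 p.2 * B' p.1 p.2).
Proof.
rewrite /mxtrace; under eq_bigr do rewrite mxE.
rewrite !big_cons big_nil !big_ord_recr !big_ord0 /= !mxE /skew_ext /=.
ring.
Qed.

End CompactPart.

(** * The groups K and K_Theta *)

Section SignedPermutations.
Variable R : realType.
Implicit Types (X Y k : 'M[R]_(4 + 4)) (f : nat -> nat) (s : nat -> R).

Lemma coef_sperm f s a b : (a < 8)%N -> (b < 8)%N ->
  coef (sperm_mx f s) a b = if b == f a then s a else 0.
Proof. by move=> ha hb; rewrite /coef mxE !inordK. Qed.

Lemma Ad_in_g k X : k *m Qform R = Qform R *m k -> in_g X -> in_g (Ad k X).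
Proof.
rewrite /in_g /Ad => kQ gX.
have kTQ : k^T *m Qform R = Qform R *m k^T.
  by rewrite -[Qform R in LHS]Qform_tr -trmx_mul -kQ trmx_mul Qform_tr.
have -> : (k *m X *m k^T)^T = k *m X^T *m k^T by rewrite !trmx_mul trmxK mulmxA.
transitivity (k *m (X^T *m Qform R + Qform R *m X) *m k^T); last by rewrite gX mulmx0 mul0mx.
by rewrite mulmxDr mulmxDl -!mulmxA kTQ !mulmxA kQ.
Qed.

Lemma Ad_invol k X : k *m k = 1%:M -> Ad k (Ad k X) = X.
Proof.
move=> kk; rewrite /Ad.
have -> : k *m (k *m X *m k^T) *m k^T = (k *m k) *m X *m (k *m k)^T.
  by rewrite trmx_mul !mulmxA.
by rewrite kk trmx1 mul1mx mulmx1.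
Qed.

Lemma det_mx22 (M : 'M[R]_2) : \det M = M 0 0 * M 1 1 - M 0 1 * M 1 0.
Proof.
rewrite (expand_det_row _ 0) !big_ord_recl big_ord0 /cofactor !det_mx11 !mxE /=.
have -> : lift 0 0 = 1 :> 'I_2 by apply/val_inj.
have -> : lift 1 0 = 0 :> 'I_2 by apply/val_inj.
by rewrite expr0 expr1; ring.
Qed.

Lemma det_half_combination k c :
  (forall i j, (2 <= i < 4)%N -> (j < 2)%N -> coef k i j + c * coef k i j.+4 = 0) ->
  let E i j := coef k i j + c * coef k i j.+4 in
  \det (ulsubmx k + c *: ursubmx k) =
    (E 0 0 * E 1 1 - E 0 1 * E 1 0) * (E 2 2 * E 3 3 - E 2 3 * E 3 2).
Proof.
move=> low0 E; set M : 'M[R]_(2 + 2) := ulsubmx k + c *: ursubmx k.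
have ME (i j : 'I_(2 + 2)) : M i j = E i j by rewrite !mxE !coef_val /= add4n.
have dl0 : dlsubmx M = 0.
  apply/matrixP => i j; rewrite 2![in LHS]mxE ME mxE.
  by apply: low0; [case: i => [[|[|]]] | exact: (ltn_ord j)].
rewrite (_ : \det (ulsubmx k + c *: ursubmx k) = \det M) //;
  by rewrite -[M]submxK dl0 det_ublock !det_mx22 !mxE /E !coef_val.
Qed.

Lemma sperm_in_K0 f s : involution8 f ->
  (forall a, (a < 8)%N -> s a * s a = 1) ->
  (forall a, (a < 8)%N -> f (swap_half a) = swap_half (f a)) ->
  (forall a, (a < 8)%N -> s (swap_half a) = s a) ->
  (forall c : R, c ^+ 2 = 1 -> \det (ulsubmx (sperm_mx f s) + c *: ursubmx (sperm_mx f s)) = 1) ->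
  in_K0 (sperm_mx f s).
Proof.
move=> f_invol s_sq f_sh s_sh det1; split; last split; last split.
- apply: mulmx1C; apply/matrixP => a b.
  have [fa_lt ffa] := f_invol _ (ltn_ord a); have [fb_lt ffb] := f_invol _ (ltn_ord b).
  rewrite mulmx_tr_sperm // coef_sperm // !mxE.
  case: (eqVneq a b) => [->|nab]; first by rewrite eqxx mulrC s_sq.
  case: eqP => [fab|_]; last by rewrite mulr0.
  by case/eqP: nab; apply/val_inj; rewrite /= -ffa -fab ffb.
- apply/matrixP => a b; have [fa_lt _] := f_invol _ (ltn_ord a).
  rewrite Qform_sperm !sperm_mulmx ?coef_sperm ?swap_half_lt //; last exact: swap_half_invol.
  by rewrite f_sh // s_sh // mul1r; case: eqP; rewrite ?mulr1 ?mulr0.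
- by rewrite -[ursubmx _]scale1r det1 ?expr1n.
- by rewrite -scaleN1r det1 // sqrrN expr1n.
Qed.

Lemma sperm_mx_invol f s : involution8 f -> (forall a, (a < 8)%N -> s a * s (f a) = 1) ->
  forall X, Ad (sperm_mx f s) (Ad (sperm_mx f s) X) = X.
Proof. by move=> f_invol hs X; rewrite Ad_invol // sperm_mx_sq. Qed.

Definition zero_on (L : seq (nat * nat)) X := {in L, forall ab, coef X ab.1 ab.2 = 0}.

Lemma zero_on_all L X : all (fun ab => coef X ab.1 ab.2 == 0) L -> zero_on L X.
Proof. by move=> /allP h ab /h /eqP. Qed.

(* [f] sends each coordinate of [L] into [L], or into the mirror image of [L] under the
   relation [in_g_mirror] satisfied by the elements of g. *)
Definition maps_coords f (L : seq (nat * nat)) : bool :=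
  all (fun ab => [&& (ab.1 < 8)%N, (ab.2 < 8)%N &
    ((f ab.1, f ab.2) \in L) || ((swap_half (f ab.2), swap_half (f ab.1)) \in L)]) L.

Lemma sperm_in_KTheta Theta L f s :
  (forall X, in_p Theta X <-> in_g X /\ zero_on L X) ->
  in_K0 (sperm_mx f s) -> involution8 f -> (forall a, (a < 8)%N -> s a * s (f a) = 1) ->
  maps_coords f L -> in_KTheta Theta (sperm_mx f s).
Proof.
move=> pE K0 f_invol hs /allP fL; split=> // X.
have kQ : sperm_mx f s *m Qform R = Qform R *m sperm_mx f s by case: K0 => _ [].
suff Ad_p Y : in_p Theta Y -> in_p Theta (Ad (sperm_mx f s) Y).
  by split=> [|/Ad_p]; rewrite ?sperm_mx_invol //; apply: Ad_p.
move=> /pE [gY zY]; apply/pE; split; first exact: Ad_in_g.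
move=> [a b] /[dup] /fL /and3P [ha hb /orP hL] /= _.
have [fa_lt _] := f_invol _ ha; have [fb_lt _] := f_invol _ hb.
rewrite coef_Ad_sperm //; case: hL => [/zY /= -> | /zY /=]; first by rewrite mulr0.
by rewrite in_g_mirror // => /eqP; rewrite oppr_eq0 => /eqP ->; rewrite mulr0.
Qed.

End SignedPermutations.

Ltac sperm_det :=
  let c := fresh "c" in let c2 := fresh "c2" in let i := fresh "i" in let j := fresh "j" in
  move=> c c2; rewrite det_half_combination => [|i j];
  [ rewrite !coef_sperm //= ?(exprS, expr0); nra
  | case: i => [|[|[|[|i]]]] //; case: j => [|[|j]] // _ _; rewrite !coef_sperm //=; lra ].

Section Parity.
Variable R : realType.

Definition parity_mx : 'M[R]_(4 + 4) := sperm_mx id (fun a => (-1) ^+ a).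

Lemma parity_in_K0 : in_K0 parity_mx.
Proof.
apply: sperm_in_K0 => // [a _ | a ha |]; first by rewrite -expr2 sqrr_sign.
  by rewrite -signr_odd -[in RHS]signr_odd; move: ha; case8 a.
sperm_det.
Qed.

(* [Ad parity_mx] only changes signs of entries, so it preserves every p_Theta. *)
Lemma parity_in_KTheta Theta : in_KTheta Theta parity_mx.
Proof.
split=> [|X]; first exact: parity_in_K0.
suff Ad_p Y : in_p Theta Y -> in_p Theta (Ad parity_mx Y).
  have invol Y : Ad parity_mx (Ad parity_mx Y) = Y.
    by apply: sperm_mx_invol => // a _; rewrite -expr2 sqrr_sign.
  by split=> [|/Ad_p]; rewrite ?invol //; apply: Ad_p.
case=> gY [lowY llY]; split; first by apply: Ad_in_g; case: parity_in_K0 => _ [].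
split=> i j ij nspan; rewrite coef_val coef_Ad_sperm ?ltn_ord // -[coef Y _ _]coef_val;
  by rewrite ?lowY ?llY ?mulr0.
Qed.

End Parity.

(** * Fixed points and complex structures *)

Section FixedPoints.
Variable R : realType.
Implicit Types (X Y k : 'M[R]_(4 + 4)) (f : nat -> nat) (s : nat -> R) (A B : nat -> nat -> R).

Lemma coef_kmx_upper A B i j : (i < j < 4)%N ->
  coef (kmx A B) i j = A i j /\ coef (kmx A B) i j.+4 = B i j.
Proof.
move=> /andP [ij j4]; have i4 : (i < 4)%N by lia.
have [i8 j8 j48] : [/\ (i < 8)%N, (j < 8)%N & (j.+4 < 8)%N] by split; lia.
by rewrite !coef_kmx // i4 j4 /= -[j.+4]addn4 modnDr !modn_small // /skew_ext ij.
Qed.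

Lemma kmx_neq0 A B i j : (i < j < 4)%N -> B i j != 0 -> kmx A B != 0.
Proof.
move=> ij; have [_ <-] := coef_kmx_upper A B ij.
by apply: contra_neq => ->; rewrite /coef mxE.
Qed.

Lemma kmx_parity_fixed A B : Ad (parity_mx R) (kmx A B) = kmx A B ->
  forall i j, (i < j < 4)%N -> odd (i + j) -> A i j = 0 /\ B i j = 0.
Proof.
move=> fixK i j ij odd_ij; have [cA cB] := coef_kmx_upper A B ij.
have [i8 j8 j48] : [/\ (i < 8)%N, (j < 8)%N & (j.+4 < 8)%N] by split; lia.
have sign : (-1) ^+ i * (-1) ^+ j = -1 :> R by rewrite -exprD -signr_odd odd_ij.
have fixE := Ad_sperm_fixed id_invol fixK.
split; [move: (fixE i j i8 j8) | move: (fixE i j.+4 i8 j48)].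
  by rewrite /= cA sign; lra.
by rewrite /= cB !exprS !mulN1r !opprK sign; lra.
Qed.

Lemma Ad_in_k k X : k *m Qform R = Qform R *m k -> in_k X -> in_k (Ad k X).
Proof.
move=> kQ [gX tX]; split; first exact: Ad_in_g.
by rewrite /Ad !trmx_mul trmxK tX mulNmx mulmxN mulmxA.
Qed.

Lemma sperm_fixes_kmx f s A B : involution8 f ->
  sperm_mx f s *m Qform R = Qform R *m sperm_mx f s ->
  (forall i j, (i < j < 4)%N ->
     s i * s j * coef (kmx A B) (f i) (f j) = A i j /\
     s i * s j.+4 * coef (kmx A B) (f i) (f j.+4) = B i j) ->
  Ad (sperm_mx f s) (kmx A B) = kmx A B.
Proof.
move=> f_invol kQ h; rewrite [LHS](in_k_kmx (Ad_in_k kQ (kmx_in_k A B))).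
apply: eq_kmx => i j ij; have [i8 j8 j48] : [/\ (i < 8)%N, (j < 8)%N & (j.+4 < 8)%N] by split; lia.
by rewrite !coef_Ad_sperm //; apply: h.
Qed.

Lemma in_m0 Theta : in_m Theta (0 : 'M[R]_(4 + 4)).
Proof.
split=> [|Y _]; last by rewrite mul0mx mxtrace0.
by split; rewrite /in_g trmx0 ?oppr0 // mul0mx mulmx0 addr0.
Qed.

Lemma invariant_acsZ Theta J c X :
  invariant_acs Theta J -> in_m Theta X -> J (c *: X) = c *: J X.
Proof.
move=> [_ [Jlin _]] mX; have m0 := in_m0 Theta.
have J0 : J 0 = 0.
  have := Jlin 1 0 0 m0 m0; rewrite !scale1r addr0 => /(congr1 (fun v => v - J 0)).
  by rewrite subrr addrK.
by rewrite -[c *: X]addr0 Jlin // J0 addr0.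
Qed.

(* A complex structure cannot preserve a real line. *)
Lemma no_invariant_acs_of_fixed_line Theta (ks : seq 'M[R]_(4 + 4)) X0 :
  {in ks, forall k, in_KTheta Theta k /\ Ad k X0 = X0} -> in_m Theta X0 -> X0 != 0 ->
  (forall Y, in_m Theta Y -> {in ks, forall k, Ad k Y = Y} -> exists c, Y = c *: X0) ->
  ~ admits_K_invariant_acs R Theta.
Proof.
move=> hks mX0 X0_nz line [J /[dup] acsJ [Jm [_ [JJ Jcomm]]]].
have [c Jc] : exists c, J X0 = c *: X0.
  apply: line => [|k /hks [kK fixX0]]; first exact: Jm.
  by rewrite -Jcomm // fixX0.
have := JJ X0 mX0; rewrite Jc (invariant_acsZ _ acsJ mX0) Jc scalerA => /eqP.
rewrite -subr_eq0 opprK -[X in _ + X]scale1r -scalerDl scaler_eq0 (negPf X0_nz) orbF.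
by move/eqP; nra.
Qed.

End FixedPoints.

(** * Parabolic subalgebras *)

(* [(a, b)] indexes the coordinate of a negative root space: [a = i], [b = j] for
   [lam i - lam j] with [j < i], and [a = 4 + i], [b = j] for [- (lam i + lam j)] with [i < j]. *)
Definition root_coord (ab : nat * nat) : bool :=
  (ab.2 < ab.1 < 4)%N || (4 <= ab.1 < 8)%N && (ab.1 - 4 < ab.2 < 4)%N.

Lemma in_pP (R : realType) Theta L (X : 'M[R]_(4 + 4)) : all root_coord L ->
  (forall i j : 'I_4, (j < i)%N ->
     ((i : nat), (j : nat)) \in L <-> ~ in_span Theta (lam i - lam j)) ->
  (forall i j : 'I_4, (i < j)%N ->
     ((4 + i)%N, (j : nat)) \in L <-> ~ in_span Theta (- (lam i + lam j))) ->
  in_p Theta X <-> in_g X /\ zero_on L X.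
Proof.
move=> /allP Lroot LA LB; split=> [[gX [lowX llX]] | [gX zX]]; split=> //; last first.
  by split=> i j ij nspan; rewrite coef_val; apply: (zX (_, _)); [apply/LA | apply/LB].
move=> [a b] /[dup] abL /Lroot; rewrite /root_coord /=.
case/orP => [/andP [ba a4] | /andP [/andP [a4 a8] /andP [ba b4]]].
  have b4 : (b < 4)%N by lia.
  by have := lowX (Ordinal a4) (Ordinal b4) ba; rewrite coef_val; apply; apply/LA.
have i4 : (a - 4 < 4)%N by lia.
have := llX (Ordinal i4) (Ordinal b4) ba; rewrite coef_val /= subnKC //; apply.
by apply/LB => //=; rewrite subnKC.
Qed.

Ltac not_in_span :=
  let cs := fresh "cs" in let Hs := fresh "Hs" in let Hc := fresh "Hc" in
  let H := fresh "H" in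
  move=> [cs [Hs Hc]]; case: cs Hs Hc => [|? [|? [|? [|]]]] // _;
  rewrite !big_cons big_nil /= => /rowP H;
  have := H i0; have := H i1; have := H i2; have := H i3; rewrite !mxE /=; lia.

Ltac in_span_by c1 c2 c3 :=
  let k := fresh "k" in
  exists [:: c1; c2; c3]; split=> //; apply/rowP => k;
  rewrite !big_cons big_nil /=; case: (ord4P k) => ->; rewrite !mxE /=; lia.

(* Each Theta below is of type A_3, so its negative roots have coefficients in {0, -1}. *)
Ltac decide_span :=
  let H := fresh "H" in
  first [ split=> // _; not_in_span
        | split=> // H; exfalso; apply: H;
          first [ in_span_by (-1)%Z 0%Z 0%Z | in_span_by 0%Z (-1)%Z 0%Z
                | in_span_by 0%Z 0%Z (-1)%Z | in_span_by (-1)%Z (-1)%Z 0%Z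
                | in_span_by (-1)%Z 0%Z (-1)%Z | in_span_by 0%Z (-1)%Z (-1)%Z
                | in_span_by (-1)%Z (-1)%Z (-1)%Z ] ].

Ltac decide_coords :=
  let i := fresh "i" in let j := fresh "j" in
  move=> i j; case: (ord4P i) => ->; case: (ord4P j) => -> // _; decide_span.

(** * The three flag manifolds *)

Definition pair_indicator (R : realType) (ps : seq (nat * nat)) (i j : nat) : R :=
  if (i, j) \in ps then 1 else 0.

Ltac case_upper_pairs :=
  let i := fresh "i" in let j := fresh "j" in let ij := fresh "ij" in let j4 := fresh "j4" in
  move=> i j /andP [ij j4]; move: j j4 i ij => [|[|[|[|j]]]] // _ [|[|[|i]]] // _.

(* [modn] does not reduce under [simpl]; unfolding it lets concrete coordinates compute. *)
Ltac kmx_simpl := rewrite ?coef_kmx // /skew_ext /modn /pair_indicator /=.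

Section Cases.
Variable R : realType.

Definition Z02 : 'M[R]_(4 + 4) := kmx (pair_indicator R [:: (0, 2)]%N) (fun _ _ => 0).
Definition Z13 : 'M[R]_(4 + 4) := kmx (pair_indicator R [:: (1, 3)]%N) (fun _ _ => 0).

Definition Theta1 := [:: a1; a2; a3].
Definition L1 : seq (nat * nat) := [:: (4, 1); (4, 2); (4, 3); (5, 2); (5, 3); (6, 3)]%N.

Lemma in_p_Theta1 (X : 'M[R]_(4 + 4)) :
  in_p Theta1 X <-> in_g X /\ zero_on L1 X.
Proof. by apply: in_pP => //; decide_coords. Qed.

Definition flip_low_bit (a : nat) : nat := if odd a then a.-1 else a.+1.

Definition X1 : 'M[R]_(4 + 4) := kmx (fun _ _ => 0) (pair_indicator R [:: (0, 2); (1, 3)]%N).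
Definition w1 : 'M[R]_(4 + 4) := sperm_mx flip_low_bit (fun _ => 1).

Lemma flip_low_bit_invol : involution8 flip_low_bit.
Proof. by move=> a; case8 a. Qed.

Lemma w1_K0 : in_K0 w1.
Proof.
apply: sperm_in_K0; first exact: flip_low_bit_invol.
- by move=> a _; rewrite mulr1.
- by move=> a; case8 a.
- by [].
- sperm_det.
Qed.

Lemma w1_KTheta : in_KTheta Theta1 w1.
Proof.
by apply: (sperm_in_KTheta in_p_Theta1 w1_K0 flip_low_bit_invol) => // a _; rewrite mulr1.
Qed.

Lemma X1_m : in_m Theta1 X1.
Proof.
split=> [|Z [kZ /in_p_Theta1 [_ zZ]]]; first exact: kmx_in_k.
have := zZ (4, 2)%N isT; have := zZ (5, 3)%N isT.
by rewrite [Z](in_k_kmx kZ) tr_kmx_mul !big_cons big_nil /=; kmx_simpl; lra.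
Qed.

Lemma Z02_kTheta1 : in_kTheta Theta1 Z02.
Proof.
have kZ : in_k Z02 := kmx_in_k _ _.
split=> //; apply/in_p_Theta1; split; first by case: kZ.
by apply: zero_on_all; rewrite /Z02 /=; kmx_simpl; rewrite ?oppr0 !eqxx.
Qed.

Lemma X1_fixed_parity : Ad (parity_mx R) X1 = X1.
Proof.
apply: sperm_fixes_kmx; [exact: id_invol | by case: (parity_in_K0 R) => _ [] |].
by rewrite /X1; case_upper_pairs; kmx_simpl; rewrite ?expr0 ?exprS; lra.
Qed.

Lemma X1_fixed_w1 : Ad w1 X1 = X1.
Proof.
apply: sperm_fixes_kmx; [exact: flip_low_bit_invol | by case: w1_K0 => _ [] |].
by case_upper_pairs; kmx_simpl; lra.
Qed.

Lemma Theta1_fixed_line Y : in_m Theta1 Y ->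
  Ad (parity_mx R) Y = Y -> Ad w1 Y = Y -> exists c, Y = c *: X1.
Proof.
move=> [kY orthY]; have := orthY _ Z02_kTheta1; rewrite [Y](in_k_kmx kY).
set A := coef Y; set B := fun i j => coef Y i j.+4.
move=> orth /kmx_parity_fixed odd0 /(Ad_sperm_fixed flip_low_bit_invol) fix_w1.
have := fix_w1 0%N 2%N isT isT; have := fix_w1 0%N 6%N isT isT.
move: orth; rewrite tr_kmx_mul /Z02 !big_cons big_nil /=; kmx_simpl => orth w06 w02.
exists (B 0%N 2%N); rewrite /X1 scale_kmx; apply: eq_kmx; case_upper_pairs; kmx_simpl.
all: rewrite ?mulr0 ?mulr1; try exact: odd0.
all: split; lra.
Qed.

Lemma Theta1_no_acs : ~ admits_K_invariant_acs R Theta1.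
Proof.
have X1_neq0 : X1 != 0 := kmx_neq0 _ (isT : (0 < 2 < 4)%N) (oner_neq0 R).
apply: (no_invariant_acs_of_fixed_line (ks := [:: parity_mx R; w1]) _ X1_m X1_neq0).
  move=> k; rewrite !inE => /orP [] /eqP ->.
    by split; [exact: parity_in_KTheta | exact: X1_fixed_parity].
  by split; [exact: w1_KTheta | exact: X1_fixed_w1].
by move=> Y mY fixY; apply: Theta1_fixed_line => //; apply: fixY; rewrite !inE eqxx ?orbT.
Qed.

Definition Theta2 := [:: a1; a2; a4].
Definition L2 : seq (nat * nat) := [:: (3, 0); (3, 1); (3, 2); (4, 1); (4, 2); (5, 2)]%N.

Lemma in_p_Theta2 (X : 'M[R]_(4 + 4)) :
  in_p Theta2 X <-> in_g X /\ zero_on L2 X.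
Proof. by apply: in_pP => //; decide_coords. Qed.

Definition w2_perm (a : nat) : nat :=
  match a with 0 => 1 | 1 => 0 | 2 => 7 | 3 => 6 | 4 => 5 | 5 => 4 | 6 => 3 | 7 => 2 | a => a end%N.

Lemma w2_perm_invol : involution8 w2_perm.
Proof. by move=> a; case8 a. Qed.

Definition X2 : 'M[R]_(4 + 4) := kmx (pair_indicator R [:: (1, 3)]%N) (pair_indicator R [:: (0, 2)]%N).
Definition w2 : 'M[R]_(4 + 4) := sperm_mx w2_perm (fun _ => 1).

Lemma w2_K0 : in_K0 w2.
Proof.
apply: sperm_in_K0; first exact: w2_perm_invol.
- by move=> a _; rewrite mulr1.
- by move=> a; case8 a.
- by [].
- sperm_det.
Qed.

Lemma w2_KTheta : in_KTheta Theta2 w2.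
Proof.
by apply: (sperm_in_KTheta in_p_Theta2 w2_K0 w2_perm_invol) => // a _; rewrite mulr1.
Qed.

Lemma Z02_kTheta2 : in_kTheta Theta2 Z02.
Proof.
have kZ : in_k Z02 := kmx_in_k _ _.
split=> //; apply/in_p_Theta2; split; first by case: kZ.
by apply: zero_on_all; rewrite /Z02 /=; kmx_simpl; rewrite ?oppr0 !eqxx.
Qed.

Lemma X2_m : in_m Theta2 X2.
Proof.
split=> [|Z [kZ /in_p_Theta2 [_ zZ]]]; first exact: kmx_in_k.
have := zZ (3, 1)%N isT; have := zZ (4, 2)%N isT.
by rewrite [Z](in_k_kmx kZ) tr_kmx_mul !big_cons big_nil /=; kmx_simpl; lra.
Qed.

Lemma X2_fixed_parity : Ad (parity_mx R) X2 = X2.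
Proof.
apply: sperm_fixes_kmx; [exact: id_invol | by case: (parity_in_K0 R) => _ [] |].
by rewrite /X2; case_upper_pairs; kmx_simpl; rewrite ?expr0 ?exprS; lra.
Qed.

Lemma X2_fixed_w2 : Ad w2 X2 = X2.
Proof.
apply: sperm_fixes_kmx; [exact: w2_perm_invol | by case: w2_K0 => _ [] |].
by rewrite /X2; case_upper_pairs; kmx_simpl; lra.
Qed.

Lemma Theta2_fixed_line Y : in_m Theta2 Y ->
  Ad (parity_mx R) Y = Y -> Ad w2 Y = Y -> exists c, Y = c *: X2.
Proof.
move=> [kY orthY]; have := orthY _ Z02_kTheta2; rewrite [Y](in_k_kmx kY).
set A := coef Y; set B := fun i j => coef Y i j.+4.
move=> orth /kmx_parity_fixed odd0 /(Ad_sperm_fixed w2_perm_invol) fix_w2.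
have := fix_w2 0%N 2%N isT isT; have := fix_w2 1%N 3%N isT isT.
move: orth; rewrite tr_kmx_mul /Z02 !big_cons big_nil /=; kmx_simpl => orth w13 w02.
exists (A 1%N 3%N); rewrite /X2 scale_kmx; apply: eq_kmx; case_upper_pairs; kmx_simpl.
all: rewrite ?mulr0 ?mulr1; try exact: odd0.
all: split; lra.
Qed.

Lemma Theta2_no_acs : ~ admits_K_invariant_acs R Theta2.
Proof.
have X2_neq0 : X2 != 0 := kmx_neq0 _ (isT : (0 < 2 < 4)%N) (oner_neq0 R).
apply: (no_invariant_acs_of_fixed_line (ks := [:: parity_mx R; w2]) _ X2_m X2_neq0).
  move=> k; rewrite !inE => /orP [] /eqP ->.
    by split; [exact: parity_in_KTheta | exact: X2_fixed_parity].
  by split; [exact: w2_KTheta | exact: X2_fixed_w2].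
by move=> Y mY fixY; apply: Theta2_fixed_line => //; apply: fixY; rewrite !inE eqxx ?orbT.
Qed.

Definition Theta3 := [:: a2; a3; a4].
Definition L3 : seq (nat * nat) := [:: (1, 0); (2, 0); (3, 0); (4, 1); (4, 2); (4, 3)]%N.

Lemma in_p_Theta3 (X : 'M[R]_(4 + 4)) :
  in_p Theta3 X <-> in_g X /\ zero_on L3 X.
Proof. by apply: in_pP => //; decide_coords. Qed.

Definition w3_perm (a : nat) : nat :=
  match a with 2 => 6 | 3 => 7 | 6 => 2 | 7 => 3 | a => a end%N.

Lemma w3_perm_invol : involution8 w3_perm.
Proof. by move=> a; case8 a. Qed.

Definition X3 : 'M[R]_(4 + 4) := kmx (pair_indicator R [:: (0, 2)]%N) (pair_indicator R [:: (0, 2)]%N).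
Definition w3 : 'M[R]_(4 + 4) := sperm_mx w3_perm (fun _ => 1).

Lemma w3_K0 : in_K0 w3.
Proof.
apply: sperm_in_K0; first exact: w3_perm_invol.
- by move=> a _; rewrite mulr1.
- by move=> a; case8 a.
- by [].
- sperm_det.
Qed.

Lemma w3_KTheta : in_KTheta Theta3 w3.
Proof.
by apply: (sperm_in_KTheta in_p_Theta3 w3_K0 w3_perm_invol) => // a _; rewrite mulr1.
Qed.

Lemma Z13_kTheta3 : in_kTheta Theta3 Z13.
Proof.
have kZ : in_k Z13 := kmx_in_k _ _.
split=> //; apply/in_p_Theta3; split; first by case: kZ.
by apply: zero_on_all; rewrite /Z13 /=; kmx_simpl; rewrite ?oppr0 !eqxx.
Qed.

Lemma X3_m : in_m Theta3 X3.
Proof.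
split=> [|Z [kZ /in_p_Theta3 [_ zZ]]]; first exact: kmx_in_k.
have := zZ (2, 0)%N isT; have := zZ (4, 2)%N isT.
by rewrite [Z](in_k_kmx kZ) tr_kmx_mul !big_cons big_nil /=; kmx_simpl; lra.
Qed.

Lemma X3_fixed_parity : Ad (parity_mx R) X3 = X3.
Proof.
apply: sperm_fixes_kmx; [exact: id_invol | by case: (parity_in_K0 R) => _ [] |].
by rewrite /X3; case_upper_pairs; kmx_simpl; rewrite ?expr0 ?exprS; lra.
Qed.

Lemma X3_fixed_w3 : Ad w3 X3 = X3.
Proof.
apply: sperm_fixes_kmx; [exact: w3_perm_invol | by case: w3_K0 => _ [] |].
by rewrite /X3; case_upper_pairs; kmx_simpl; lra.
Qed.

Lemma Theta3_fixed_line Y : in_m Theta3 Y ->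
  Ad (parity_mx R) Y = Y -> Ad w3 Y = Y -> exists c, Y = c *: X3.
Proof.
move=> [kY orthY]; have := orthY _ Z13_kTheta3; rewrite [Y](in_k_kmx kY).
set A := coef Y; set B := fun i j => coef Y i j.+4.
move=> orth /kmx_parity_fixed odd0 /(Ad_sperm_fixed w3_perm_invol) fix_w3.
have := fix_w3 0%N 2%N isT isT; have := fix_w3 1%N 3%N isT isT.
move: orth; rewrite tr_kmx_mul /Z13 !big_cons big_nil /=; kmx_simpl => orth w13 w02.
exists (A 0%N 2%N); rewrite /X3 scale_kmx; apply: eq_kmx; case_upper_pairs; kmx_simpl.
all: rewrite ?mulr0 ?mulr1; try exact: odd0.
all: split; lra.
Qed.

Lemma Theta3_no_acs : ~ admits_K_invariant_acs R Theta3.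
Proof.
have X3_neq0 : X3 != 0 := kmx_neq0 _ (isT : (0 < 2 < 4)%N) (oner_neq0 R).
apply: (no_invariant_acs_of_fixed_line (ks := [:: parity_mx R; w3]) _ X3_m X3_neq0).
  move=> k; rewrite !inE => /orP [] /eqP ->.
    by split; [exact: parity_in_KTheta | exact: X3_fixed_parity].
  by split; [exact: w3_KTheta | exact: X3_fixed_w3].
by move=> Y mY fixY; apply: Theta3_fixed_line => //; apply: fixY; rewrite !inE eqxx ?orbT.
Qed.

End Cases.

Theorem proposition12 (R : realType) (Theta : seq 'rV[int]_4) :
  Theta = [:: a1; a2; a3] \/ Theta = [:: a1; a2; a4] \/ Theta = [:: a2; a3; a4] ->
  ~ admits_K_invariant_acs R Theta.
Proof.
by case=> [->|[->|->]]; [exact: Theta1_no_acs | exact: Theta2_no_acs | exact: Theta3_no_acs].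
Qed.
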